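(* Let $\chi\in\sum_{1\leq s\leq r-1}\mathcal B\otimes\land^sW\otimes\land^{r-s}W$ for some $r\geq3$. If $\alpha(\chi)+\beta(\chi)=\gamma(\chi)+\delta(\chi)$, then $\chi=\sum_I b_I(S_I-w_I-w'_I)$ for suitable $b_I\in\mathcal B$, where the sum runs over strictly increasing sequences $I=(i_1<i_2<\cdots<i_r)$ of indices.
   Context: $\mathcal B$ is a graded commutative algebra over $\mathbb Q$ and $W$ a graded rational vector space concentrated in odd degrees with basis $\{w_i\}$ indexed by a totally ordered set. In $\mathcal B\otimes\land W\otimes\land W$ write $w=1\otimes w\otimes 1$, $w'=1\otimes1\otimes w$, and in $\mathcal B\otimes\land W\otimes\land W\otimes\land W$ write $w,w',w''$ for $w$ in the first, second, third copy. Define algebra maps $\alpha,\beta,\gamma,\delta\colon\mathcal B\otimes\land W\otimes\land W\to\mathcal B\otimes\land W\otimes\land W\otimes\land W$, each the identity on $\mathcal B$, by: $\alpha(w)=w,\ \alpha(w')=w'$; $\beta(w)=w+w',\ \beta(w')=w''$; $\gamma(w)=w,\ \gamma(w')=w'+w''$; $\delta(w)=w',\ \delta(w')=w''$. For $I=(i_1,\dots,i_r)$ write $w_I=w_{i_1}\cdots w_{i_r}$, $w'_I=w'_{i_1}\cdots w'_{i_r}$, and $S_I=(w_{i_1}+w'_{i_1})\cdots(w_{i_r}+w'_{i_r})$. *)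

From HB Require Import structures.
From mathcomp Require Import all_boot all_order all_algebra.
Set Implicit Arguments. Unset Strict Implicit. Unset Printing Implicit Defensive.
Import Order.TTheory GRing.Theory.

(* The graded tensor product  B (x) /\W (x) ... (x) /\W  (k copies) is
   identified, as usual, with B (x) /\(W + ... + W): a generator of copy c with
   index i is the pair (c, i) : nat * T.  A "word" (seq (nat * T)) denotes the
   product of its generators in order.  An element is represented by a finite
   formal list of terms (b, word) meaning  sum b * word.  The basis of the
   exterior algebra is given by strictly increasing words for the lexicographic
   order (copy first, then index); a word with distinct letters equals
   (-1)^(#inversions) times its sorted version, and a word with a repeated
   letter is 0 (generators are odd).  Thus w_I w'_J corresponds to the sorted
   word [(0,i1);..;(0,ip);(1,j1);..;(1,jq)] = basis element b (x) w_I (x) w_J. *)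

Definition ltg d (T : orderType d) (a b : nat * T) : bool :=
  (a.1 < b.1)%N || ((a.1 == b.1) && (a.2 < b.2)%O).

Fixpoint ninv d (T : orderType d) (w : seq (nat * T)) : nat :=
  match w with
  | [::] => 0%N
  | x :: w' => (count (fun y => ltg y x) w' + ninv w')%N
  end.

Definition ext_elt (B : Type) d (T : orderType d) := seq (B * seq (nat * T)).

(* coefficient of the basis monomial K (K a strictly increasing word) *)
Definition coef (B : zmodType) d (T : orderType d) (x : ext_elt B T)
    (K : seq (nat * T)) : B :=
  (\sum_(p <- x)
     (if uniq p.2 && perm_eq p.2 K
      then (if odd (ninv p.2) then - p.1 else p.1) else 0))%R.

Definition ext_eq (B : zmodType) d (T : orderType d) (x y : ext_elt B T) : Prop :=
  forall K, coef x K = coef y K.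

(* algebra map, identity on B, sending a generator of copy c with index i to
   the sum over c' in f c of the generator of copy c' with index i *)
Fixpoint expand d (T : orderType d) (f : nat -> seq nat) (w : seq (nat * T))
  : seq (seq (nat * T)) :=
  match w with
  | [::] => [:: [::]]
  | x :: w' => flatten [seq [seq (c, x.2) :: u | u <- expand f w'] | c <- f x.1]
  end.

Definition amap (B : Type) d (T : orderType d) (f : nat -> seq nat)
    (x : ext_elt B T) : ext_elt B T :=
  flatten [seq [seq (p.1, u) | u <- expand f p.2] | p <- x].

(* alpha(w) = w, alpha(w') = w' *)
Definition alpha_f (c : nat) : seq nat :=
  if c == 0%N then [:: 0%N] else if c == 1%N then [:: 1%N] else [::].
(* beta(w) = w + w', beta(w') = w'' *)
Definition beta_f (c : nat) : seq nat :=
  if c == 0%N then [:: 0%N; 1%N] else if c == 1%N then [:: 2%N] else [::].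
(* gamma(w) = w, gamma(w') = w' + w'' *)
Definition gamma_f (c : nat) : seq nat :=
  if c == 0%N then [:: 0%N] else if c == 1%N then [:: 1%N; 2%N] else [::].
(* delta(w) = w', delta(w') = w'' *)
Definition delta_f (c : nat) : seq nat :=
  if c == 0%N then [:: 1%N] else if c == 1%N then [:: 2%N] else [::].

(* x lies in  sum_{1<=s<=r-1} B (x) /\^s W (x) /\^(r-s) W :
   every term is b * (word in copies 0,1 with s letters of copy 0 and
   r-s letters of copy 1, 1 <= s <= r-1) *)
Definition in_mid_sum (B : Type) d (T : orderType d) (r : nat)
    (x : ext_elt B T) : bool :=
  all (fun p => [&& size p.2 == r,
                    all (fun g => (g.1 <= 1)%N) p.2
                  & (0 < count (fun g => g.1 == 0%N) p.2 < r)%N]) x.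

Definition SI_term (B : zmodType) d (T : orderType d) (b : B) (I : seq T)
  : ext_elt B T :=
  amap (fun c => if c == 0%N then [:: 0%N; 1%N] else [::])
       [:: (b, [seq (0%N, i) | i <- I])]
  ++ [:: ((- b)%R, [seq (0%N, i) | i <- I]); ((- b)%R, [seq (1%N, i) | i <- I])].

Definition graded_comm (B : algType rat) (Bd : int -> {pred B}) : Prop :=
  (forall n, (0 : B)%R \in Bd n) /\
      (forall n (x y : B), x \in Bd n -> y \in Bd n -> (x + y)%R \in Bd n) /\
      (forall n (a : rat) (x : B), x \in Bd n -> (a *: x)%R \in Bd n) /\
      (1 : B)%R \in Bd 0%R /\
      (forall m n (x y : B), x \in Bd m -> y \in Bd n -> (x * y)%R \in Bd (m + n)%R) /\
      (forall m n (x y : B), x \in Bd m -> y \in Bd n ->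
         (x * y)%R = (if odd `|m|%N && odd `|n|%N then - (y * x) else y * x)%R) /\
      (forall x : B, exists (s : seq int) (comp : int -> B),
          (forall n, comp n \in Bd n) /\ x = (\sum_(n <- s) comp n)%R) /\
      (forall (s : seq int) (comp : int -> B), uniq s ->
          (forall n, comp n \in Bd n) -> (\sum_(n <- s) comp n)%R = 0%R ->
          forall n, n \in s -> comp n = 0%R).

From HB Require Import structures.
From mathcomp Require Import all_boot all_order all_algebra.
From mathcomp Require Import zify.
Set Implicit Arguments. Unset Strict Implicit. Unset Printing Implicit Defensive.
Import Order.TTheory GRing.Theory.

(* An element of B (x) /\W (x) ... (x) /\W is a formal list of terms b * word;
   its coefficient on a duplicate-free monomial K is  sum_p p.1 * wsign p.2 K,
   where wsign u K is the sign of the permutation carrying the word u to K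
   (0 if u is not a permutation of K).  All statements are identities between
   such coefficients, which are additive in B. Change of variables (section CopyMap).  If the algebra map f sends the
      generator of copy c to the sum of the generators of the copies c' with
      pre c' = c, the coefficient of K in f(x) is  sig K * coef x (phi K),
      where phi relabels every letter by pre and sig K is an explicit sign
      (lemma coef_amap, proved by induction on words).
   2. Through 1., the hypothesis alpha(chi) + beta(chi) = gamma(chi) +
      delta(chi), read on monomials over the copies 0, 1, 2, says that the
      normalized coefficients of chi agree on the two relabellings of K by
      beta and gamma (lemma cocycle_ncoef).  Hence the normalized coefficient
      of a monomial with r >= 3 distinct indices does not depend on how the
      indices are split between the two copies (lemma split_invariance), and
      it vanishes when an index occurs in both copies (coef_repeated_index).
   3. The coefficient of a mixed monomial K in b (S_I - w_I - w'_I) is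
      b * sig K if I lists the indices of K, and 0 otherwise; unmixed
      monomials get coefficient 0 (lemmas coef_SI_mixed, coef_SI_unmixed).
   Comparing coefficients monomial by monomial (lemma coef_expansion) gives
   the theorem, b_I being the common normalized coefficient of the monomials
   with index set I. *)

Lemma map_collision (T1 T2 : eqType) (h : T1 -> T2) (s : seq T1) a b :
  a \in s -> b \in s -> a != b -> h a = h b -> ~~ uniq (map h s).
Proof.
elim: s => //= y s IH; rewrite !inE => /orP[/eqP ea|ai] /orP[/eqP eb|bi] ab hab.
- by rewrite ea eb eqxx in ab.
- by rewrite negb_and negbK -ea hab map_f.
- by rewrite negb_and negbK -eb -hab map_f.
- by rewrite negb_and (IH ai bi ab hab) orbT.
Qed.

Lemma nuniq_map (T1 T2 : eqType) (h : T1 -> T2) (s : seq T1) : uniq s ->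
  ~~ uniq (map h s) -> exists a b, [/\ a \in s, b \in s, a != b & h a = h b].
Proof.
elim: s => //= x s IH /andP[xs us] /nandP[/negbNE /mapP [y ys ey]|h'].
  exists x, y; split; rewrite ?inE ?eqxx ?ys ?orbT //.
  by apply: contraNneq xs => ->.
have [a [b [aK bK ab e]]] := IH us h'.
by exists a, b; split; rewrite ?inE ?aK ?bK ?orbT.
Qed.

Section Words.
Variables (d : Order.disp_t) (T : orderType d).
Local Notation G := (nat * T)%type.
Local Notation ltb a := (fun y : nat * T => ltg y a).

Lemma ltg_irr (a : G) : ltg a a = false.
Proof. by rewrite /ltg ltnn ltxx andbF. Qed.

Lemma ltg_asym (a b : G) : ltg a b -> ltg b a = false.
Proof.
case: a b => [a1 a2] [b1 b2]; rewrite /ltg /=.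
by case: (ltngtP a1 b1) => // _ /lt_gtF.
Qed.

Lemma ltg_total (a b : G) : a != b -> ltg a b || ltg b a.
Proof.
case: a b => [a1 a2] [b1 b2]; rewrite /ltg /=.
case: (ltngtP a1 b1) => // e h.
by case: (ltgtP a2 b2) => // e2; rewrite e e2 eqxx in h.
Qed.

Lemma ltg_trans (b a c : G) : ltg a b -> ltg b c -> ltg a c.
Proof.
case: a b c => [a1 a2] [b1 b2] [c1 c2]; rewrite /ltg /=.
move=> /orP[h1|/andP[/eqP e1 h1]] /orP[h2|/andP[/eqP e2 h2]].
- by rewrite (ltn_trans h1 h2).
- by rewrite -e2 h1.
- by rewrite e1 h2.
- by rewrite e1 e2 eqxx (lt_trans h1 h2) orbT.
Qed.

Lemma count_ltg_split (a : G) (P : seq G) : a \notin P ->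
  (count (ltb a) P + count (ltg a) P)%N = size P.
Proof.
elim: P => //= y P IH; rewrite inE negb_or => /andP[ny nP].
rewrite addnACA IH //.
case: (boolP (ltg a y)) => h; first by rewrite (ltg_asym h).
by have := ltg_total ny; rewrite (negbTE h) /= => ->.
Qed.

Fixpoint cross (s t : seq G) : nat :=
  if s is y :: s' then (count (ltb y) t + cross s' t)%N else 0%N.

Lemma ninv_cat (s t : seq G) : ninv (s ++ t) = (ninv s + ninv t + cross s t)%N.
Proof. by elim: s => [|y s IH] /=; [lia | rewrite count_cat IH; lia]. Qed.

Lemma cross_cons_r s (a : G) t : cross s (a :: t) = (count (ltg a) s + cross s t)%N.
Proof. by elim: s => [|y s IH] /=; [lia | rewrite IH; lia]. Qed.

Lemma cross_cat_r s t1 t2 : cross s (t1 ++ t2) = (cross s t1 + cross s t2)%N.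
Proof. by elim: s => [|y s IH] /=; [lia | rewrite IH count_cat; lia]. Qed.

Lemma ninv_delete (a : G) (P Q : seq G) : a \notin P -> exists k,
  (ninv (P ++ a :: Q) + count (ltb a) (P ++ a :: Q) =
   ninv (P ++ Q) + size P + 2 * k)%N.
Proof.
move=> aP; exists (count (ltb a) Q).
rewrite !ninv_cat cross_cons_r /= count_cat /= ltg_irr.
by have := count_ltg_split aP; lia.
Qed.

Lemma ninv_move (x : G) (P Q R : seq G) : x \notin Q -> exists k,
  (ninv (P ++ Q ++ x :: R) + ninv (P ++ x :: Q ++ R) = size Q + 2 * k)%N.
Proof.
move=> xQ.
have h1 := ninv_cat P (Q ++ x :: R).
have h2 := ninv_cat P (x :: Q ++ R).
have h3 := ninv_cat Q (x :: R).
have h4 := ninv_cat Q R.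
rewrite /= count_cat in h2.
rewrite cross_cat_r !cross_cons_r cross_cat_r in h1 h2.
rewrite cross_cons_r in h3.
exists (ninv P + ninv Q + ninv R + count (ltb x) R + cross Q R + cross P Q
        + cross P R + count (ltg x) P)%N.
by rewrite h1 h2 h3 h4 /=; have := count_ltg_split xQ; lia.
Qed.

Lemma ninv_sorted (s : seq G) : sorted (@ltg _ T) s -> ninv s = 0%N.
Proof.
elim: s => //= x s IH hp.
rewrite IH ?(path_sorted hp) // addn0.
have /allP h := order_path_min (@ltg_trans) hp.
by apply/eqP; rewrite -leqn0 leqNgt -has_count; apply/hasPn => y /h /ltg_asym ->.
Qed.

Lemma rem_cat_notin (a : G) (P Q : seq G) : a \notin P -> rem a (P ++ a :: Q) = P ++ Q.
Proof.
elim: P => /= [|y P IH]; first by rewrite eqxx.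
by rewrite inE negb_or => /andP[ay aP]; rewrite eq_sym (negbTE ay) IH.
Qed.

Lemma uniq_mid (x : G) (P Q : seq G) :
  uniq (P ++ x :: Q) = (x \notin P ++ Q) && uniq (P ++ Q).
Proof.
have /perm_uniq -> : perm_eq (P ++ x :: Q) (x :: P ++ Q) by rewrite -cat1s perm_catCA.
by [].
Qed.

Lemma notin_pre (x : G) (P Q : seq G) : uniq (P ++ x :: Q) -> x \notin P.
Proof. by rewrite uniq_mid mem_cat negb_or => /andP[/andP[]]. Qed.

Lemma split2 (a b : G) K : a \in K -> b \in K -> a != b ->
  exists P Q R, K = P ++ a :: Q ++ b :: R \/ K = P ++ b :: Q ++ a :: R.
Proof.
move=> aK bK ab; case/splitPr: aK bK => P Q.
rewrite mem_cat inE eq_sym (negbTE ab) /= => /orP[bP|bQ].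
  by case/splitPr: bP => P1 P2; exists P1, P2, Q; right; rewrite -catA.
by case/splitPr: bQ => Q1 Q2; exists P, Q1, Q2; left.
Qed.

Local Open Scope ring_scope.

Lemma sgn_mod m n : (m %% 2 = n %% 2)%N -> (-1) ^+ m = (-1) ^+ n :> int.
Proof. by rewrite !modn2 => h; rewrite -signr_odd h signr_odd. Qed.

(* wsign u L: the coefficient of the basis monomial L in the word u. *)
Definition wsign (u L : seq G) : int :=
  if uniq u && perm_eq u L then (-1) ^+ ninv u else 0.

Lemma wsign_nuniq u L : ~~ uniq L -> wsign u L = 0.
Proof.
rewrite /wsign; case: ifP => // /andP[uu /perm_uniq].
by rewrite uu => <-.
Qed.

Lemma wsign_perm u L L' : perm_eq L L' -> wsign u L = wsign u L'.
Proof. by move=> pL; rewrite /wsign (permPr pL). Qed.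

Lemma wsign_ne0 u L : wsign u L != 0 -> uniq u /\ perm_eq u L.
Proof. by rewrite /wsign; case: ifP => // /andP[]. Qed.

Lemma wsign_size u L : size u != size L -> wsign u L = 0.
Proof.
move=> h; apply/eqP; apply: contraNT h => /wsign_ne0 [_ pu].
by rewrite (perm_size pu).
Qed.

Lemma wsign_all (p : pred G) u L : all p u -> ~~ all p L -> wsign u L = 0.
Proof.
move=> hu hL; apply/eqP; apply: contraNT hL => /wsign_ne0 [_ pu].
by rewrite -(perm_all _ pu).
Qed.

Lemma wsign_has (p : pred G) u L : has p u -> ~~ has p L -> wsign u L = 0.
Proof.
move=> hu hL; apply/eqP; apply: contraNT hL => /wsign_ne0 [_ pu].
by rewrite -(perm_has _ pu).
Qed.

Lemma wsign_nil L : wsign [::] L = if L is [::] then 1 else 0.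
Proof.
case: L => [|x L]; rewrite /wsign //.
by case: ifP => // /andP[_ /perm_size].
Qed.

(* Expansion along the first letter y of the word: y must be moved in front
   of the letters of L below it. *)
Lemma wsign_cons y v L : wsign (y :: v) L =
  if uniq L && (y \in L) then (-1) ^+ count (ltb y) L * wsign v (rem y L) else 0.
Proof.
rewrite /wsign.
case uL: (uniq L); last first.
  by case: ifP => // /andP[u /perm_uniq]; rewrite u uL.
case yL: (y \in L); last first.
  by case: ifP => // /andP[_ /perm_mem /(_ y)]; rewrite inE eqxx yL.
have pL := perm_to_rem yL.
rewrite (permPr pL) perm_cons.
case pv: (perm_eq v (rem y L)); rewrite ?andbF ?mulr0 //=.
have ur : uniq (rem y L) := rem_uniq y uL.
rewrite (perm_uniq pv) ur (perm_mem pv) mem_rem_uniqF //= exprD.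
by rewrite (permP pv) (permP pL) /= ltg_irr.
Qed.

Definition ecoef (f : nat -> seq nat) (u K : seq G) : int :=
  \sum_(v <- expand f u) wsign v K.

Lemma ecoef_nil f K : ecoef f [::] K = wsign [::] K.
Proof. by rewrite /ecoef /= big_seq1. Qed.

Lemma ecoef_cons f x u K : ecoef f (x :: u) K =
  \sum_(c <- f x.1) (if uniq K && ((c, x.2) \in K) then
     (-1) ^+ count (ltb (c, x.2)) K * ecoef f u (rem (c, x.2) K) else 0).
Proof.
rewrite /ecoef /= big_flatten /= big_map; apply: eq_bigr => c _.
rewrite big_map; under eq_bigr do rewrite wsign_cons.
by case: ifP => _; [rewrite mulr_sumr | rewrite big1].
Qed.

(* Algebra maps sending each copy c to a sum of at most two copies, every
   target copy c' (those with hp c') coming from the single copy pre c'. *)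
Definition copy_map (f : nat -> seq nat) (hp : nat -> bool) (pre : nat -> nat) :=
  [/\ forall c c', (c' \in f c) = hp c' && (pre c' == c),
      forall c, uniq (f c) & forall c, (size (f c) <= 2)%N].

Section CopyMap.
Variables (f : nat -> seq nat) (hp : nat -> bool) (pre : nat -> nat).

Definition pl (a : G) : G := (pre a.1, a.2).
Definition phi (K : seq G) := map pl K.
Definition hpa (a : G) := hp a.1.
Definition sig (K : seq G) : int :=
  if all hpa K then (-1) ^+ (ninv K + ninv (phi K)) else 0.

Lemma sig_all K : all hpa K -> sig K = (-1) ^+ (ninv K + ninv (phi K)).
Proof. by rewrite /sig => ->. Qed.

Lemma sig_out a K : a \in K -> ~~ hp a.1 -> sig K = 0.
Proof. by move=> aK ha; rewrite /sig; case: allP => // /(_ a aK); rewrite /hpa (negbTE ha). Qed.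

Lemma all_hpa_rem a K : all hpa K -> all hpa (rem a K).
Proof. by move=> /allP hK; apply/allP => z /mem_rem /hK. Qed.

(* contribution of the target letter b of K to the coefficient of K in the
   expansion of a word  x :: u  with pl b = x *)
Definition eterm (u K : seq G) (b : G) : int :=
  (-1) ^+ count (ltb b) K * ecoef f u (rem b K).

Section Step.
Variables (u : seq G) (x : G).
Hypothesis IH : forall K, ecoef f u K = sig K * wsign u (phi K).

Lemma step_single P Q b : pl b = x -> uniq (P ++ b :: Q) ->
  all hpa (P ++ b :: Q) -> x \notin phi (P ++ Q) ->
  eterm u (P ++ b :: Q) b = sig (P ++ b :: Q) * wsign (x :: u) (phi (P ++ b :: Q)).
Proof.
move=> hb uK hK xPQ; have bP := notin_pre uK.
have xP : x \notin phi P by apply: contra xPQ; rewrite /phi map_cat mem_cat => ->.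
have phiK : phi (P ++ b :: Q) = phi P ++ x :: phi Q by rewrite /phi map_cat /= hb.
rewrite /eterm rem_cat_notin // IH phiK wsign_cons rem_cat_notin //.
rewrite mem_cat mem_head orbT andbT uniq_mid -map_cat xPQ /=.
have aPQ : all hpa (P ++ Q) by move: hK; rewrite !all_cat /= => /and3P[-> _ ->].
rewrite !sig_all // phiK.
case uPQ: (uniq (phi (P ++ Q))); last by rewrite wsign_nuniq ?uPQ // !mulr0.
rewrite /phi map_cat !mulrA -!exprD; congr (_ * _); apply: sgn_mod.
have [k1 h1] := ninv_delete Q bP.
have [k2 h2] := ninv_delete (phi Q) xP.
by move: h1 h2; rewrite /phi size_map; lia.
Qed.

Lemma step_pair P Q R b b' : pl b = x -> pl b' = x ->
  uniq (P ++ b :: Q ++ b' :: R) -> all hpa (P ++ b :: Q ++ b' :: R) ->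
  eterm u (P ++ b :: Q ++ b' :: R) b + eterm u (P ++ b :: Q ++ b' :: R) b' = 0.
Proof.
move=> hb hb' uK hK.
have eK : P ++ b :: Q ++ b' :: R = (P ++ b :: Q) ++ b' :: R by rewrite -catA.
have bP : b \notin P := notin_pre uK.
have b'P : b' \notin P ++ b :: Q by apply: (@notin_pre b' _ R); rewrite -eK.
have e1 : rem b (P ++ b :: Q ++ b' :: R) = P ++ Q ++ b' :: R.
  exact: rem_cat_notin.
have e2 : rem b' (P ++ b :: Q ++ b' :: R) = P ++ b :: Q ++ R.
  by rewrite eK rem_cat_notin // -catA.
have a1 : all hpa (P ++ Q ++ b' :: R) by rewrite -e1 all_hpa_rem.
have a2 : all hpa (P ++ b :: Q ++ R) by rewrite -e2 all_hpa_rem.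
rewrite /eterm e1 e2 !IH !sig_all //.
have -> : phi (P ++ Q ++ b' :: R) = phi P ++ phi Q ++ x :: phi R.
  by rewrite /phi !(map_cat, map_cons) hb'.
have -> : phi (P ++ b :: Q ++ R) = phi P ++ x :: phi Q ++ phi R.
  by rewrite /phi !(map_cat, map_cons) hb.
have pM : perm_eq (phi P ++ phi Q ++ x :: phi R) (phi P ++ x :: phi Q ++ phi R).
  by rewrite perm_cat2l -(cat1s x (phi R)) perm_catCA.
rewrite (wsign_perm _ pM).
case: (boolP (x \in phi Q)) => xQ.
  by rewrite wsign_nuniq ?mulr0 ?addr0 // uniq_mid !mem_cat xQ orbT.
rewrite !mulrA -mulrDl -!exprD.
set m1 := (_ + _)%N; set m2 := (_ + _)%N.
rewrite (@sgn_mod m1 m2.+1) ?exprS ?mulN1r ?addNr ?mul0r //.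
have [k1 h1] := ninv_delete (Q ++ b' :: R) bP.
have [k2 h2] := ninv_delete R b'P.
have [k3 h3] := ninv_move (phi P) (phi R) xQ.
rewrite -eK -catA cat_cons size_cat /= in h2.
rewrite /phi size_map in h3.
by move: h1 h2 h3; rewrite /m1 /m2 /phi; lia.
Qed.

Lemma step_sum K (bs : seq G) : uniq K -> all hpa K ->
  (forall b, (b \in bs) = (b \in K) && (pl b == x)) -> uniq bs -> (size bs <= 2)%N ->
  \sum_(b <- bs) eterm u K b = sig K * wsign (x :: u) (phi K).
Proof.
move=> uK hK bsP ubs.
case: bs bsP ubs => [|b [|b' [|? ?]]] // bsP ubs _.
- rewrite big_nil wsign_cons.
  suff /negbTE -> : x \notin phi K by rewrite andbF mulr0.
  by apply/mapP => [[b bK eb]]; move: (bsP b); rewrite bK eb eqxx.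
- have /andP[bK /eqP hb] : (b \in K) && (pl b == x) by rewrite -bsP mem_head.
  rewrite big_seq1; case/splitPr: bK uK hK bsP => P Q uK hK bsP.
  apply: step_single => //; apply/mapP => [[b0 b0PQ eb0]].
  have : b0 \in [:: b].
    rewrite bsP -eb0 eqxx andbT.
    by move: b0PQ; rewrite !mem_cat inE => /orP[->|->]; rewrite ?orbT.
  by rewrite mem_seq1 => /eqP e; move: uK; rewrite uniq_mid -e b0PQ.
- have /andP[bK /eqP hb] : (b \in K) && (pl b == x) by rewrite -bsP mem_head.
  have /andP[b'K /eqP hb'] : (b' \in K) && (pl b' == x).
    by rewrite -bsP !inE eqxx orbT.
  have bb' : b != b' by move: ubs; rewrite /= inE andbT.
  have [P [Q [R eK]]] := split2 bK b'K bb'.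
  rewrite big_cons big_seq1.
  have twice (a a' : G) : pl a = x -> pl a' = x ->
      wsign (x :: u) (phi (P ++ a :: Q ++ a' :: R)) = 0.
    move=> ha ha'; rewrite wsign_cons /phi !(map_cat, map_cons) ha ha' uniq_mid.
    by rewrite !mem_cat mem_head !orbT.
  case: eK => eK; rewrite eK in uK hK *; rewrite twice // mulr0.
  - exact: step_pair.
  - by rewrite addrC; apply: step_pair.
Qed.

End Step.

Hypothesis fP : copy_map f hp pre.

Lemma ecoef_formula u K : ecoef f u K = sig K * wsign u (phi K).
Proof.
have [fspec funiq fsize] := fP.
elim: u K => [|[x1 x2] u IH] K.
  rewrite ecoef_nil !wsign_nil; case: K => [|a K]; first by rewrite /sig mulr1.
  by rewrite mulr0.
rewrite ecoef_cons /=.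
(* a monomial with a repeated letter gets coefficient 0 on both sides *)
case uK: (uniq K); last first.
  rewrite big1 => [|c _] //; rewrite wsign_nuniq ?mulr0 //.
  by apply: contraFN uK; apply: map_uniq.
(* so does a monomial with a letter outside the target copies *)
case hK: (all hpa K); last first.
  rewrite /sig hK mul0r big1_seq // => c /= cf; case: ifP => // aK.
  rewrite IH /sig; case: ifP; rewrite ?mul0r ?mulr0 // => hrem.
  have hc : hp c by move: (fspec x1 c); rewrite cf => /esym /andP[].
  by move: hK; rewrite (perm_all _ (perm_to_rem aK)) /= hrem /hpa hc.
(* the copies c over x1 with (c, x2) in K give the letters of K over (x1, x2) *)
rewrite -big_mkcond /= -big_filter.
set A := filter _ (f x1).
rewrite -[LHS]/(\sum_(c <- A) eterm u K (c, x2)).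
rewrite -(big_map (pair^~ x2) xpredT (eterm u K)).
apply: step_sum => //.
- case=> c i; apply/mapP/andP => [[c' + [-> ->]] | [cK /eqP [pc ei]]].
    by rewrite mem_filter fspec => /andP[cK /andP[_ /eqP pc]]; rewrite /pl pc.
  subst i; exists c => //; rewrite mem_filter fspec cK pc eqxx andbT.
  exact: (allP hK _ cK).
- by rewrite map_inj_uniq ?filter_uniq // => c c' [].
- by rewrite size_map size_filter (leq_trans (count_size _ _)).
Qed.

End CopyMap.

Lemma coef_wsign (B : zmodType) (x : ext_elt B T) K :
  coef x K = \sum_(p <- x) p.1 *~ wsign p.2 K.
Proof.
rewrite /coef; apply: eq_bigr => p _; rewrite /wsign.
case: ifP => _; last by rewrite mulr0z.
by rewrite -signr_odd; case: odd; rewrite ?expr1 ?expr0 ?mulrN1z ?mulr1z.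
Qed.

Lemma coef_cat (B : zmodType) (x y : ext_elt B T) K :
  coef (x ++ y) K = coef x K + coef y K.
Proof. by rewrite /coef big_cat. Qed.

Lemma coef_flatten (B : zmodType) (xs : seq (ext_elt B T)) K :
  coef (flatten xs) K = \sum_(x <- xs) coef x K.
Proof. by rewrite /coef big_flatten. Qed.

Lemma coef_seq1 (B : zmodType) (b : B) u K : coef [:: (b, u)] K = b *~ wsign u K.
Proof. by rewrite coef_wsign big_seq1. Qed.

Lemma coef_perm (B : zmodType) (x : ext_elt B T) K K' :
  perm_eq K K' -> coef x K = coef x K'.
Proof. by move=> pK; rewrite !coef_wsign; apply: eq_bigr => p _; rewrite (wsign_perm _ pK). Qed.

Lemma coef_amap f hp pre (B : zmodType) (x : ext_elt B T) K :
  copy_map f hp pre -> coef (amap f x) K = coef x (phi pre K) *~ sig hp pre K.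
Proof.
move=> fP; rewrite coef_wsign /amap big_flatten /= big_map coef_wsign mulrz_suml.
apply: eq_bigr => p _; rewrite big_map /= -mulrz_sumr.
by rewrite -/(ecoef f p.2 K) (ecoef_formula fP) mulrC mulrzA.
Qed.

Lemma sig_perm f hp pre K K' : copy_map f hp pre -> uniq (phi pre K) ->
  perm_eq K K' -> sig hp pre K = sig hp pre K'.
Proof.
move=> fP uK pK.
have := coef_perm (amap f [:: (1 : int, phi pre K)]) pK.
rewrite !(coef_amap _ _ fP) !coef_seq1 -(wsign_perm _ (perm_map (pl pre) pK)).
rewrite /wsign uK perm_refl /= !mulrzz !mul1r.
by move=> /(congr1 ( *%R ((-1) ^+ ninv (phi pre K)))); rewrite !signrMK.
Qed.

End Words.

(* The maps alpha, beta, gamma, delta, and the map sigma : w |-> w + w' used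
   in S_I, described by their target copies and preimage functions. *)
Definition hp_a (c : nat) := (c <= 1)%N.
Definition pre_a (c : nat) := c.
Definition hp_bg (c : nat) := (c <= 2)%N.
Definition pre_b (c : nat) := if c == 2 then 1%N else 0%N.
Definition pre_g (c : nat) := if c == 0%N then 0%N else 1%N.
Definition hp_d (c : nat) := (1 <= c <= 2)%N.
Definition pre_d (c : nat) := c.-1.
Definition sigma_f (c : nat) : seq nat := if c == 0%N then [:: 0%N; 1%N] else [::].
Definition pre_s (c : nat) := 0%N.

Lemma alpha_copy : copy_map alpha_f hp_a pre_a.
Proof. by split=> [c c'|c|c]; case: c => [|[|c]] //; case: c' => [|[|[|c']]]. Qed.
Lemma beta_copy : copy_map beta_f hp_bg pre_b.
Proof. by split=> [c c'|c|c]; case: c => [|[|c]] //; case: c' => [|[|[|c']]]. Qed.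
Lemma gamma_copy : copy_map gamma_f hp_bg pre_g.
Proof. by split=> [c c'|c|c]; case: c => [|[|c]] //; case: c' => [|[|[|c']]]. Qed.
Lemma delta_copy : copy_map delta_f hp_d pre_d.
Proof. by split=> [c c'|c|c]; case: c => [|[|c]] //; case: c' => [|[|[|c']]]. Qed.
Lemma sigma_copy : copy_map sigma_f hp_a pre_s.
Proof. by split=> [c c'|c|c]; case: c => [|[|c]] //; case: c' => [|[|[|c']]]. Qed.

Section Monomials.
Variables (d : Order.disp_t) (T : orderType d).
Local Notation G := (nat * T)%type.
Local Open Scope ring_scope.

Definition word (c : nat) (I : seq T) : seq G := [seq (c, i) | i <- I].
Definition label (I : seq T) (k : T -> nat) : seq G := [seq (k i, i) | i <- I].
Definition copy (c : nat) (a : G) := a.1 == c.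

Lemma word_inj c : injective (pair c : T -> G).
Proof. by move=> i j []. Qed.

Lemma perm_word c I J : perm_eq (word c I) (word c J) = perm_eq I J.
Proof. by apply/idP/idP; [apply: perm_map_inj; apply: word_inj | apply: perm_map]. Qed.

Lemma all_copy_word c I : all (copy c) (word c I).
Proof. by rewrite all_map; apply/allP => i _; rewrite /copy /= eqxx. Qed.

Lemma word_snd c K : all (copy c) K -> K = word c (map snd K).
Proof.
move=> /allP hK; rewrite /word -map_comp map_id_in // => a /hK.
by case: a => a1 a2 /eqP /= ->.
Qed.

Lemma ninv_word01 I : ninv (word 0 I) = ninv (word 1 I).
Proof.
elim: I => //= x I ->; congr (_ + _)%N.
by rewrite !count_map; apply: eq_count => y; rewrite /ltg.
Qed.

Lemma wsign_word01 I J : wsign (word 0 I) (word 0 J) = wsign (word 1 I) (word 1 J).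
Proof.
by rewrite /wsign !(map_inj_uniq (@word_inj _)) !perm_word ninv_word01.
Qed.

Lemma ninv_word_sorted c I : sorted <%O I -> ninv (word c I) = 0%N.
Proof.
move=> sI; apply: ninv_sorted; rewrite sorted_map.
by apply: sub_sorted sI => i j /= h; rewrite /ltg /= ltnn eqxx h.
Qed.

Lemma phi_s K : phi pre_s K = word 0 (map snd K).
Proof. by rewrite /phi /word -map_comp. Qed.

Lemma wsign_word_sorted I J : sorted <%O I -> uniq J ->
  wsign (word 0 I) (word 0 J) = if I == sort <=%O J then 1 else 0.
Proof.
move=> sI uJ; have uI := lt_sorted_uniq sI.
rewrite /wsign perm_word (map_inj_uniq (@word_inj _)) uI ninv_word_sorted //=.
case: eqP => [->|nI]; first by rewrite perm_sort perm_refl.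
case: ifP => // pIJ; case: nI; apply: lt_sorted_eq => //.
  by rewrite sort_lt_sorted.
by move=> i; rewrite mem_sort (perm_mem pIJ).
Qed.

Lemma phi_label pre I k : phi pre (label I k) = label I (pre \o k).
Proof. by rewrite /phi /label -map_comp. Qed.

Lemma label_eq_in I k k' : {in I, k =1 k'} -> label I k = label I k'.
Proof. by move=> e; apply/eq_in_map => i /e ->. Qed.

Lemma mem_label I k c i : ((c, i) \in label I k) = (i \in I) && (c == k i).
Proof.
apply/mapP/andP => [[j jI [-> ->]] | [iI /eqP ->]]; first by rewrite eqxx.
by exists i.
Qed.

Lemma snd_label I k : map snd (label I k) = I.
Proof. by rewrite /label -map_comp map_id. Qed.

Lemma uniq_label I k : uniq I -> uniq (label I k).
Proof. by move=> u; apply: (@map_uniq _ _ snd); rewrite snd_label. Qed.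

Definition mixed (K : seq G) :=
  [&& all (hpa hp_a) K, has (copy 0) K & has (copy 1) K].

(* The support condition of the theorem, read on a single monomial. *)
Lemma mixed_count K : all (hpa hp_a) K -> (0 < count (copy 0) K < size K)%N -> mixed K.
Proof.
move=> hK /andP[c0 cs]; rewrite /mixed hK has_count c0 /=.
have [//|/hasPn h1] := boolP (has (copy 1) K).
suff : all (copy 0) K by rewrite all_count => /eqP e; rewrite e ltnn in cs.
apply/allP => a aK; move: (allP hK a aK) (h1 a aK); rewrite /hpa /hp_a /copy.
by case: a aK => [[|[|?]] ?].
Qed.

Lemma coef_SI (B : zmodType) (b : B) (I : seq T) (K : seq G) :
  coef (SI_term b I) K = b *~ wsign (word 0 I) (phi pre_s K) *~ sig hp_a pre_s K
    - b *~ wsign (word 0 I) K - b *~ wsign (word 1 I) K.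
Proof.
rewrite /SI_term coef_cat (coef_amap _ _ sigma_copy) !coef_seq1.
by rewrite coef_wsign big_cons big_seq1 /= !mulNrz addrA.
Qed.

Lemma coef_SI_mixed (B : zmodType) (b : B) I K : mixed K ->
  coef (SI_term b I) K = b *~ wsign (word 0 I) (phi pre_s K) *~ sig hp_a pre_s K.
Proof.
case/and3P => _ h0 h1; rewrite coef_SI.
have nall c c' : c != c' -> has (copy c') K -> ~~ all (copy c) K.
  move=> cc' /hasP [a aK /eqP ac]; apply/allPn; exists a => //.
  by rewrite /copy ac eq_sym.
rewrite (wsign_all (all_copy_word 0 I) (nall 0%N 1%N isT h1)).
rewrite (wsign_all (all_copy_word 1 I) (nall 1%N 0%N isT h0)).
by rewrite !mulr0z !subr0.
Qed.

Lemma coef_SI_unmixed (B : zmodType) (b : B) I K : I != [::] -> ~~ mixed K ->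
  coef (SI_term b I) K = 0.
Proof.
move=> nI; rewrite coef_SI /mixed.
have hI c : has (copy c) (word c I) by case: I nI => // i I _; rewrite /= /copy eqxx.
case: (boolP (all (hpa hp_a) K)) => /= [hK|/allPn [a aK ha] _]; last first.
  rewrite (sig_out pre_s aK ha) mulr0z.
  have w c : (c <= 1)%N -> wsign (word c I) K = 0.
    move=> c1; apply: (wsign_all (p := hpa hp_a)); last by apply/allPn; exists a.
    by rewrite all_map; apply/allP.
  by rewrite !w // !mulr0z !subr0.
rewrite negb_and => /orP[h0|h1].
- have K1 : all (copy 1) K.
    apply/allP => a aK; have := allP hK a aK; have := hasPn h0 a aK.
    by rewrite /copy /hpa /hp_a; case: a aK => [[|[|?]] ?].
  rewrite (wsign_has (hI 0%N) h0) mulr0z subr0 sig_all // phi_s.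
  have eK := word_snd K1; set J := map snd K in eK *.
  rewrite eK -ninv_word01 addnn -signr_odd odd_double mulr1z.
  by rewrite wsign_word01 subrr.
- have K0 : all (copy 0) K.
    apply/allP => a aK; have := allP hK a aK; have := hasPn h1 a aK.
    by rewrite /copy /hpa /hp_a; case: a aK => [[|[|?]] ?].
  rewrite (wsign_has (hI 1%N) h1) mulr0z subr0 sig_all // phi_s -(word_snd K0).
  by rewrite addnn -signr_odd odd_double mulr1z subrr.
Qed.

End Monomials.

Section Coefficients.
Variables (B : zmodType) (d : Order.disp_t) (T : orderType d) (r : nat).
Variable chi : ext_elt B T.
Hypothesis r3 : (3 <= r)%N.
Hypothesis chi_mid : in_mid_sum r chi.
Hypothesis chi_cocycle : ext_eq (amap alpha_f chi ++ amap beta_f chi)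
                                (amap gamma_f chi ++ amap delta_f chi).
Local Notation G := (nat * T)%type.
Local Open Scope ring_scope.

(* the normalized coefficient: that of the word K itself, in any order *)
Definition ncoef (K : seq G) : B := coef chi K *~ (-1) ^+ ninv K.

Lemma coef_ncoef K : coef chi K = ncoef K *~ (-1) ^+ ninv K.
Proof. by rewrite /ncoef -mulrzA -exprD -signr_odd addnn odd_double expr0 mulr1z. Qed.

Lemma coef_nuniq K : ~~ uniq K -> coef chi K = 0.
Proof. by move=> h; rewrite coef_wsign big1 // => p _; rewrite wsign_nuniq ?mulr0z. Qed.

Lemma ncoef_nuniq K : ~~ uniq K -> ncoef K = 0.
Proof. by move=> h; rewrite /ncoef coef_nuniq ?mul0rz. Qed.

(* The cocycle identity on a monomial over the copies 0, 1, 2 meeting both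
   copies 0 and 2 (so that alpha and delta do not contribute). *)
Lemma cocycle_ncoef K : all (hpa hp_bg) K -> has (copy 0) K -> has (copy 2) K ->
  ncoef (phi pre_b K) = ncoef (phi pre_g K).
Proof.
move=> hK /hasP [a0 a0K /eqP c0] /hasP [a2 a2K /eqP c2].
have ha2 : ~~ hp_a a2.1 by rewrite c2.
have hd0 : ~~ hp_d a0.1 by rewrite c0.
have := chi_cocycle K; rewrite !coef_cat.
rewrite (coef_amap _ _ alpha_copy) (coef_amap _ _ beta_copy).
rewrite (coef_amap _ _ gamma_copy) (coef_amap _ _ delta_copy).
rewrite (sig_out pre_a a2K ha2) (sig_out pre_d a0K hd0).
rewrite !mulr0z add0r addr0 !sig_all // /ncoef => h.
have := congr1 (fun z => z *~ (-1) ^+ ninv K) h; rewrite -!mulrzA -!exprD.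
rewrite (@sgn_mod (_ + _ + _)%N (ninv (phi pre_b K))); last by lia.
by rewrite (@sgn_mod (_ + _ + _)%N (ninv (phi pre_g K))); last by lia.
Qed.

Definition split_coef (I : seq T) (e : pred T) : B :=
  ncoef (label I (fun i => nat_of_bool (e i))).

(* Enlarging the copy-1 part keeps the normalized coefficient, as long as
   both parts stay nonempty: the cocycle identity with copy 2 := e,
   copy 1 := e' minus e, copy 0 := the rest. *)
Lemma split_coef_mono I (e e' : pred T) : {in I, forall i, e i -> e' i} ->
  has e I -> ~~ all e' I -> split_coef I e = split_coef I e'.
Proof.
move=> ee' /hasP [i1 i1I e1] /allPn [i0 i0I ne0].
pose k i : nat := if e i then 2%N else if e' i then 1%N else 0%N.
have := cocycle_ncoef (K := label I k).
rewrite !phi_label /split_coef.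
rewrite (label_eq_in (k := pre_b \o k) (k' := fun i => nat_of_bool (e i))); last first.
  by move=> i _; rewrite /= /k /pre_b; case: (e i); case: (e' i).
rewrite (label_eq_in (k := pre_g \o k) (k' := fun i => nat_of_bool (e' i))); last first.
  move=> i iI; rewrite /= /k /pre_g; have := ee' i iI.
  by case: (e i); case: (e' i) => // ->.
have ne0' : ~~ e i0 by apply: contra ne0; apply: ee'.
apply.
- by apply/allP => _ /mapP [i _ ->]; rewrite /hpa /hp_bg /k /=; case: (e i); case: (e' i).
- apply/hasP; exists (k i0, i0); first exact: (map_f (fun i => (k i, i))).
  by rewrite /copy /k /= (negbTE ne0') (negbTE ne0).
- by apply/hasP; exists (k i1, i1); [exact: (map_f (fun i => (k i, i))) | rewrite /copy /k /= e1].
Qed.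

Lemma split_invariance a b c I (e : pred T) : uniq [:: a, b, c & I] ->
  has e [:: a, b, c & I] -> ~~ all e [:: a, b, c & I] ->
  split_coef [:: a, b, c & I] e = split_coef [:: a, b, c & I] (predC1 a).
Proof.
set J := [:: a, b, c & I] => uJ he ne.
have [aJ bJ cJ] : [/\ a \in J, b \in J & c \in J] by rewrite !inE !eqxx !orbT.
move: uJ; rewrite /= !inE !negb_or => /andP[/and3P[ab ac _] /andP[/andP[bc _] _]].
have out (p : pred T) x : x \in J -> ~~ p x -> ~~ all p J.
  by move=> xJ px; apply/allPn; exists x.
have one (p : pred T) x : x \in J -> p x -> has p J.
  by move=> xJ px; apply/hasP; exists x.
case: (boolP (e a)) => ea; last first.
  apply: split_coef_mono => //; last by apply: (out _ a) => //=; rewrite eqxx.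
  by move=> i _ ei /=; apply: contraNneq ea => <-.
have ab' : b != a by rewrite eq_sym.
rewrite -(@split_coef_mono J (pred1 a) e) //; first last.
- by apply: (one _ a) => /=.
- by move=> i _ /eqP ->.
rewrite (@split_coef_mono J (pred1 a) (pred2 a b)) //; first last.
- by apply: (out _ c) => //=; rewrite negb_or ![c == _]eq_sym ac bc.
- by apply: (one _ a) => /=.
- by move=> i _ /= ->.
rewrite -(@split_coef_mono J (pred1 b) (pred2 a b)) //; first last.
- by apply: (out _ c) => //=; rewrite negb_or ![c == _]eq_sym ac bc.
- by apply: (one _ b) => /=.
- by move=> i _ /= ->; rewrite orbT.
apply: split_coef_mono.
- by move=> i _ /= /eqP ->.
- by apply: (one _ b) => /=.
- by apply: (out _ a) => //=; rewrite eqxx.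
Qed.

(* An index i occurring in both copies, together with a further copy-1
   letter: move the other copy-1 letters to copy 2 and apply the cocycle
   identity; the beta side then has the letter (0, i) twice. *)
Lemma ncoef_repeated1 L i b : all (hpa hp_a) L -> (0%N, i) \in L -> (1%N, i) \in L ->
  b \in L -> copy 1 b -> b != (1%N, i) -> ncoef L = 0.
Proof.
move=> hL i0 i1 bL b1 bi.
pose g (a : G) := if (a.1 == 1%N) && (a != (1%N, i)) then (2%N, a.2) else a.
have gL : phi pre_g (map g L) = L.
  rewrite /phi -map_comp map_id_in // => a aL /=.
  have := allP hL a aL; rewrite /g /pl /hpa /hp_a.
  by case: a aL => [[|[|?]] ?] //= _ _; case: ifP.
rewrite -gL -cocycle_ncoef.
- apply: ncoef_nuniq; rewrite /phi -map_comp.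
  by apply: (map_collision i0 i1); rewrite /comp /g /pl /= ?eqxx.
- apply/allP => _ /mapP [a aL ->]; have := allP hL a aL.
  by rewrite /g /hpa /hp_a /hp_bg; case: ifP => //= _ h; lia.
- by apply/hasP; exists (g (0%N, i)); [exact: map_f | rewrite /g].
- apply/hasP; exists (g b); first exact: map_f.
  by move: b1; rewrite /g /copy => /eqP ->; rewrite eqxx bi.
Qed.

(* The same with a further copy-0 letter: move copy 1 to copy 2 and (0, i)
   to copy 1; now the gamma side has the letter (1, i) twice. *)
Lemma ncoef_repeated0 L i b : all (hpa hp_a) L -> (0%N, i) \in L -> (1%N, i) \in L ->
  b \in L -> copy 0 b -> b != (0%N, i) -> ncoef L = 0.
Proof.
move=> hL i0 i1 bL b0 bi.
pose g (a : G) := if a.1 == 1%N then (2%N, a.2) else if a == (0%N, i) then (1%N, i) else a.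
have gL : phi pre_b (map g L) = L.
  rewrite /phi -map_comp map_id_in // => a aL /=.
  have := allP hL a aL; rewrite /g /pl /hpa /hp_a.
  by case: a aL => [[|[|?]] ?] //= _ _; case: ifP => // /eqP [->].
rewrite -gL cocycle_ncoef.
- apply: ncoef_nuniq; rewrite /phi -map_comp.
  by apply: (map_collision i0 i1); rewrite /comp /g /pl /= ?eqxx.
- apply/allP => _ /mapP [a aL ->]; have := allP hL a aL.
  by rewrite /g /hpa /hp_a /hp_bg; case: ifP => //= _ h; case: ifP => //= _; lia.
- by apply/hasP; exists (g b); [exact: map_f | rewrite /g (eqP b0) /= (negbTE bi)].
- by apply/hasP; exists (g (1%N, i)); [exact: map_f | rewrite /g].
Qed.

Lemma coef_repeated_index L : all (hpa hp_a) L -> size L = r ->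
  ~~ uniq (map snd L) -> coef chi L = 0.
Proof.
move=> hL sL nuL; have [uL|/coef_nuniq //] := boolP (uniq L).
have [i [i0 i1]] : exists i, (0%N, i) \in L /\ (1%N, i) \in L.
  have [a [b [aL bL ab e]]] := nuniq_map uL nuL.
  move: (allP hL a aL) (allP hL b bL) ab; rewrite /hpa /hp_a.
  case: a b aL bL e => [[|[|?]] ai] [[|[|?]] bi] aL bL /= e //= _ _ ab; subst bi;
    by [rewrite eqxx in ab | exists ai].
rewrite coef_ncoef; suff -> : ncoef L = 0 by rewrite mul0rz.
have [/hasP [b bL /andP[b1 bi]] | h1] :=
  boolP (has (fun a : G => copy 1 a && (a != (1%N, i))) L).
  exact: ncoef_repeated1 hL i0 i1 bL b1 bi.
have [/hasP [b bL /andP[b0 bi]] | h0] :=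
  boolP (has (fun a : G => copy 0 a && (a != (0%N, i))) L).
  exact: ncoef_repeated0 hL i0 i1 bL b0 bi.
have sub : {subset L <= [:: (0%N, i); (1%N, i)]}.
  move=> [c x] aL; have := allP hL _ aL; rewrite /hpa /hp_a /= => c1.
  have := hasPn h0 _ aL; have := hasPn h1 _ aL; rewrite !inE /copy !xpair_eqE /=.
  by case: c c1 {aL} => [|[|c]] //= _; case: (x == i).
by have := uniq_leq_size uL sub; rewrite sL /=; lia.
Qed.

Definition indices (K : seq G) : seq T := sort <=%O (map snd K).

Definition bI (I : seq T) : B := if I is a :: _ then split_coef I (predC1 a) else 0.

Lemma coef_distinct K : mixed K -> size K = r -> uniq (map snd K) ->
  coef chi K = bI (indices K) *~ sig hp_a pre_s K.
Proof.
move=> /and3P[hK h0 h1] sK uJ; set I := indices K.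
have pIJ : perm_eq I (map snd K) by rewrite /I perm_sort perm_refl.
have sI : sorted <%O I by rewrite sort_lt_sorted.
have noboth i : (0%N, i) \in K -> (1%N, i) \in K -> False.
  by move=> i0 i1; have := map_collision (h := snd) i0 i1 isT erefl; rewrite uJ.
pose e i := (1%N, i) \in K.
pose W := label I (fun i => nat_of_bool (e i)).
have pKW : perm_eq K W.
  apply: uniq_perm; [exact: map_uniq uJ | exact/uniq_label/lt_sorted_uniq | ].
  case=> c i; rewrite mem_label (perm_mem pIJ); apply/idP/andP.
    move=> cK; split; first exact: (map_f snd cK).
    have := allP hK _ cK; rewrite /e /hpa /hp_a /=.
    case: c cK => [|[|c]] //= cK _; last by rewrite cK.
    by case h: ((1%N, i) \in K) => //; case: (noboth i cK h).
  move=> [/mapP [[c' j] jK /= ->] /eqP ->]; rewrite /e.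
  case h: ((1%N, j) \in K) => //=; have := allP hK _ jK.
  by case: c' jK => [|[|?]] // jK; rewrite jK in h.
have sgW : sig hp_a pre_s K = (-1) ^+ ninv W.
  rewrite (sig_perm sigma_copy _ pKW); last first.
    by rewrite phi_s map_inj_uniq //; apply: word_inj.
  rewrite sig_all; last by apply/allP => _ /mapP [i _ ->]; rewrite /hpa /hp_a leq_b1.
  by rewrite phi_s snd_label ninv_word_sorted // addn0.
have [a [b [c [I' EI]]]] : exists a b c I', I = [:: a, b, c & I'].
  have : size I = r by rewrite size_sort size_map.
  by case: (I) => [|a [|b [|c I']]] /= szI; try lia; exists a, b, c, I'.
rewrite (coef_perm _ pKW) coef_ncoef sgW; congr (_ *~ _).
rewrite -[ncoef W]/(split_coef I e) /bI EI; apply: split_invariance; rewrite -EI.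
- exact: lt_sorted_uniq.
- have [[c1 i] iK /eqP /= c11] := hasP h1; rewrite c11 in iK.
  by apply/hasP; exists i; [rewrite (perm_mem pIJ) (map_f snd iK) | rewrite /e].
- have [[c0 i] iK /eqP /= c00] := hasP h0; rewrite c00 in iK.
  apply/allPn; exists i; first by rewrite (perm_mem pIJ) (map_f snd iK).
  by apply/negP => /(noboth i iK).
Qed.

Lemma coef_outside K : ~~ mixed K || (size K != r) -> coef chi K = 0.
Proof.
move=> hK; rewrite coef_wsign big1_seq // => p /= pchi.
have [/wsign_ne0 [_ pK]|/negPn /eqP -> //] := boolP (wsign p.2 K != 0).
have /and3P [/eqP sp ap cp] := allP chi_mid p pchi.
exfalso; move: hK; apply/negP; rewrite negb_or negbK -(perm_size pK) sp eqxx andbT.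
have : mixed p.2 by apply: mixed_count; rewrite // sp.
by rewrite /mixed (perm_all _ pK) !(perm_has _ pK).
Qed.

Definition chi_indices : seq (seq T) :=
  undup [seq I <- [seq indices p.2 | p <- chi] | sorted <%O I && (size I == r)].

Lemma chi_indicesP I : I \in chi_indices -> sorted <%O I /\ size I = r.
Proof. by rewrite mem_undup mem_filter => /andP[/andP[? /eqP ?] _]. Qed.

Lemma coef_support K : size K = r -> uniq (map snd K) ->
  indices K \notin chi_indices -> coef chi K = 0.
Proof.
move=> sK uJ nI; rewrite coef_wsign big1_seq // => p /= pchi.
have [/wsign_ne0 [_ pK]|/negPn /eqP -> //] := boolP (wsign p.2 K != 0).
case/negP: nI; rewrite mem_undup mem_filter sort_lt_sorted uJ size_sort size_map sK eqxx /=.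
by apply/mapP; exists p => //; apply/perm_sort_leP; rewrite perm_sym; apply: perm_map.
Qed.

Lemma coef_expansion K :
  coef chi K = \sum_(I <- chi_indices) coef (SI_term (bI I) I) K.
Proof.
have [mK|mK] := boolP (mixed K); last first.
  rewrite coef_outside ?mK // big1_seq // => I /= /chi_indicesP [_ sI].
  by apply: coef_SI_unmixed => //; apply/eqP => eI; rewrite eI /= in sI; lia.
under eq_bigr => I _ do rewrite coef_SI_mixed // phi_s.
have [sK|nsK] := eqVneq (size K) r; last first.
  rewrite coef_outside ?nsK ?orbT // big1_seq // => I /chi_indicesP [_ sI].
  by rewrite wsign_size ?mulr0z ?mul0rz // !size_map sI eq_sym.
have [uJ|nuJ] := boolP (uniq (map snd K)); last first.
  rewrite coef_repeated_index //; last by case/and3P: mK.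
  rewrite big1 // => I _; rewrite wsign_nuniq ?mulr0z ?mul0rz //.
  by rewrite (map_inj_uniq (@word_inj _ _ 0%N)).
rewrite (eq_big_seq (fun I => if I == indices K then bI I *~ sig hp_a pre_s K else 0)).
  have [II|nII] := boolP (indices K \in chi_indices); last first.
    rewrite coef_support // big1_seq // => I /= II'.
    by case: eqP => // eI; move: nII; rewrite -eI II'.
  rewrite (bigD1_seq (indices K)) ?undup_uniq //= eqxx big1 ?addr0.
    exact: coef_distinct.
  by move=> I /negbTE ->.
move=> I /chi_indicesP [sI _]; rewrite wsign_word_sorted //.
by case: eqP => _; rewrite ?mulr1z ?mulr0z ?mul0rz.
Qed.

End Coefficients.

Theorem mainTheorem8 (B : algType rat) (Bd : int -> {pred B})
    (hB : graded_comm Bd) (d : Order.disp_t) (T : orderType d)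
    (r : nat) (chi : ext_elt B T) :
  (3 <= r)%N ->
  in_mid_sum r chi ->
  ext_eq (amap alpha_f chi ++ amap beta_f chi)
         (amap gamma_f chi ++ amap delta_f chi) ->
  exists l : seq (B * seq T),
    all (fun p => sorted (fun i j : T => (i < j)%O) p.2 && (size p.2 == r)) l /\
    ext_eq chi (flatten [seq SI_term p.1 p.2 | p <- l]).
Proof.
move=> r3 chi_mid chi_cocycle.
exists [seq (bI chi J, J) | J <- chi_indices r chi]; split.
  by apply/allP => _ /mapP [J /chi_indicesP [sJ sz] ->]; rewrite /= sJ sz eqxx.
move=> K; rewrite (coef_expansion r3 chi_mid chi_cocycle) coef_flatten.
by rewrite -map_comp big_map.
Qed.
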